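(* Let $\mathcal{G}=(\mathcal{V},\mathcal{E})$ be a DAG with treatment $A$ and outcome $Y$ as in the context, and let $\mathcal{G}'=\mathcal{G}\setminus(A\to Y)$. Let $P\subseteq\mathcal{P}$ be a set of precision variables, $Z\subseteq\mathcal{V}\setminus\{A,Y\}$, and $U\subseteq\mathcal{W}$ a set of extended confounding variables such that $Z\cup P\cup U$ is a $(Z\cup P)$-irreducible adjustment set for estimating $\tau$. Then in $\mathcal{G}'$: (i) $A\perp_{\mathcal{G}'}Y\mid Z\cup P\cup U$; (ii) $A\perp_{\mathcal{G}'}Y\mid Z\cup U$; hence $Z\cup P\cup U$ and $Z\cup U$ are valid adjustment sets. In $\mathcal{G}$: (a) $P\perp_{\mathcal{G}}A\mid Z$; (b) $P\perp_{\mathcal{G}}U\mid A\cup Z$. Moreover, if $S$ is a suboptimal precision variable and $P^*$ is a precision variable such that $S\perp_{\mathcal{G}'}Y\mid P^*\cup Z$ for all $Z\subseteq\mathcal{V}\setminus\{A,Y\}$, then (c) $S\perp_{\mathcal{G}}Y\mid Z\cup P^*$.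
   Context: $\mathcal{G}=(\mathcal{V},\mathcal{E})$ is a DAG containing treatment $A$ and outcome $Y$ with an edge $A\to Y$; variables follow a linear Gaussian SEM Markov and faithful to $\mathcal{G}$; no variable of $\mathcal{V}\setminus\{A,Y\}$ is a descendant of $A$. $\perp_{\mathcal{H}}$ denotes d-separation in graph $\mathcal{H}$. $\tau=\frac{\partial}{\partial a}E\{Y\mid do(A=a)\}$. A set $Z\subseteq\mathcal{V}\setminus\{A,Y\}$ is a valid adjustment set if the OLS estimator of the $A$-coefficient when regressing $Y$ on $A$ and $Z$ is unbiased for $\tau$ for every distribution Markov to $\mathcal{G}$ (equivalently here, $A\perp_{\mathcal{G}'}Y\mid Z$). For $K\subseteq Z$, a valid set $Z$ is $K$-irreducible if no proper subset $Z'\subsetneq Z$ with $K\subseteq Z'$ is valid. Precision variables $\mathcal{P}$: $V\in\mathcal{V}\setminus\{A,Y\}$ d-separated from $A$ in $\mathcal{G}'$ given every $K\subseteq\mathcal{V}\setminus\{A,Y\}$, and d-connected to $Y$ in $\mathcal{G}'$ given some $L\subseteq\mathcal{V}\setminus\{A,Y\}$. Suboptimal precision variables: $P\in\mathcal{P}$ for which there is another $P^*\in\mathcal{P}$ with all paths from $P$ to $Y$ in $\mathcal{G}'$ blocked given $P^*\cup Z$ for any $Z\subseteq\mathcal{V}\setminus\{A,Y\}$. Extended confounding variables $\mathcal{W}$: $V\in\mathcal{V}\setminus\{A,Y\}$ d-connected in $\mathcal{G}'$ to $A$ given some $K\subseteq\mathcal{V}\setminus\{A,Y\}$ and to $Y$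 given some $L\subseteq\mathcal{V}\setminus\{A,Y\}$. *)

From mathcomp Require Import all_boot.
Set Implicit Arguments. Unset Strict Implicit. Unset Printing Implicit Defensive.

Section DSep.
Variable T : finType.

(* A directed graph is an edge relation E : rel T ; E u v means u -> v. *)
Definition dag (E : rel T) : Prop := forall x y, E x y -> ~~ connect E y x.

Definition remove_edge (E : rel T) (a b : T) : rel T :=
  fun x y => E x y && ~~ ((x == a) && (y == b)).

Definition adj (E : rel T) : rel T := fun u v => E u v || E v u.

Fixpoint active_from (E : rel T) (Z : {set T}) (a b : T) (s : seq T) : bool :=
  match s with
  | [::] => true
  | c :: s' =>
      (if E a b && E c b then [exists w in Z, connect E b w] else b \notin Z)
      && active_from E Z b c s'
  end.

Definition active (E : rel T) (Z : {set T}) (x : T) (s : seq T) : bool :=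
  match s with
  | [::] => true
  | b :: s' => active_from E Z x b s'
  end.

Definition dconnected (E : rel T) (Z : {set T}) (x y : T) : Prop :=
  exists s : seq T,
    [&& path (adj E) x s, uniq (x :: s), last x s == y & active E Z x s].

Definition dsep (E : rel T) (X Y Z : {set T}) : Prop :=
  forall x y, x \in X -> y \in Y -> ~ dconnected E Z x y.

Variables (A Y : T).

Definition others : {set T} := ~: [set A; Y].

Definition Gp (E : rel T) : rel T := remove_edge E A Y.

(* valid adjustment set (graphical characterisation given in the context:
   A _||_{G'} Y | Z) *)
Definition valid_adj (E : rel T) (Z : {set T}) : Prop :=
  Z \subset others /\ dsep (Gp E) [set A] [set Y] Z.

Definition irreducible (E : rel T) (K Z : {set T}) : Prop :=
  K \subset Z /\ valid_adj E Z /\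
  (forall Z' : {set T}, K \subset Z' -> Z' \proper Z -> ~ valid_adj E Z').

Definition precision (E : rel T) (v : T) : Prop :=
  v \in others /\
  (forall K : {set T}, K \subset others -> dsep (Gp E) [set v] [set A] K) /\
  (exists L : {set T}, L \subset others /\ dconnected (Gp E) L v Y).

Definition suboptimal (E : rel T) (v : T) : Prop :=
  precision E v /\
  exists Ps : T, Ps != v /\ precision E Ps /\
    (forall Z : {set T}, Z \subset others ->
       dsep (Gp E) [set v] [set Y] (Ps |: Z)).

Definition ext_confounder (E : rel T) (v : T) : Prop :=
  v \in others /\
  (exists K : {set T}, K \subset others /\ dconnected (Gp E) K v A) /\
  (exists L : {set T}, L \subset others /\ dconnected (Gp E) L v Y).

End DSep.

From mathcomp Require Import all_boot.
Set Implicit Arguments. Unset Strict Implicit. Unset Printing Implicit Defensive.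

(* A has no descendant but Y, and Y has no child, so Y can only be an
   endpoint of a path that is active given a set avoiding Y; such a path never
   uses the edge A -> Y and is active in G' as well.  A precision variable p
   has no G'-walk to A avoiding Y: shortening it to a simple path and
   conditioning exactly on its colliders would d-connect p and A in G'.  Each
   separation then follows because a d-connecting path, cut at a precision
   variable, or glued to a G'-path from an extended confounder to A, or
   stopped just before Y, would yield such a forbidden walk. *)

Section Walks.
Variables (T : finType) (F : rel T).

Fixpoint colliders (a b : T) (s : seq T) : seq T :=
  match s with
  | [::] => [::]
  | c :: s' => (if F a b && F c b then [:: b] else [::]) ++ colliders b c s'
  end.

Lemma colliders_sub_belast a b s : {subset colliders a b s <= belast b s}.
Proof.
elim: s a b => [|c s IH] a b x //=; rewrite mem_cat inE.
case: ifP => _ /=; last by move/IH ->; rewrite orbT.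
by rewrite inE => /orP[-> // | /IH ->]; rewrite orbT.
Qed.

Lemma active_from_colliders (K : {set T}) a b s :
  uniq (b :: s) -> {subset colliders a b s <= K} ->
  {in belast b s, forall x, x \in K -> x \in colliders a b s} ->
  active_from F K a b s.
Proof.
elim: s a b => [|c s IH] a b //= /andP[bs /andP[cs us]] collK Kcoll.
apply/andP; split.
  case: ifP => Fabc.
    apply/existsP; exists b; rewrite connect0 andbT collK //.
    by rewrite Fabc mem_cat mem_head.
  apply/negP => bK; have := Kcoll b (mem_head _ _) bK; rewrite Fabc /=.
  by move/colliders_sub_belast/mem_belast; rewrite (negbTE bs).
apply: IH; first by rewrite /= cs.
  by move=> x x_coll; apply: collK; rewrite mem_cat x_coll orbT.
move=> x xs xK; have := Kcoll x; rewrite inE xs orbT => /(_ isT xK).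
rewrite mem_cat => /orP[|//]; case: ifP; rewrite ?inE // => _ /eqP xb.
by move: xs; rewrite xb => /mem_belast; rewrite (negbTE bs).
Qed.

Lemma active_from_subset (K K' : {set T}) a b s :
  K \subset K' -> {in b :: s, forall x, x \in K' -> x \in K} ->
  active_from F K a b s -> active_from F K' a b s.
Proof.
move=> sKK'; elim: s a b => [|c s IH] a b //= K'K /andP[open_b act].
apply/andP; split; last by apply: IH => // x xs; apply: K'K; rewrite inE xs orbT.
case: ifP open_b => _.
  case/existsP => w /andP[wK bw]; apply/existsP; exists w.
  by rewrite (subsetP sKK').
by apply: contra => /(K'K b (mem_head _ _)).
Qed.

Lemma path_adj_rev x y s :
  path (adj F) x (rcons s y) -> path (adj F) y (rcons (rev s) x).
Proof.
have -> : rcons (rev s) x = rev (belast x (rcons s y)).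
  by rewrite belast_rcons rev_cons.
rewrite -{2}(last_rcons x s y) rev_path; apply: sub_path => u v.
by rewrite /adj orbC.
Qed.

End Walks.

Section Confounding.
Variables (T : finType) (E : rel T) (A Y : T).

Let G' := Gp A Y E.

Lemma Gp_sub : subrel G' E.
Proof. by move=> x y /andP[]. Qed.

Lemma others_neqY v : v \in others A Y -> v != Y.
Proof. by rewrite !inE negb_or => /andP[]. Qed.

Lemma Y_notin_subset_others (K : {set T}) : K \subset others A Y -> Y \notin K.
Proof. by move/subsetP=> KO; apply/negP => /KO/others_neqY; rewrite eqxx. Qed.

Lemma precision_walk_to_A p s :
  precision A Y E p -> path (adj G') p s -> last p s = A -> Y \in s.
Proof.
case=> p_others [sep_pA _] ps lA; apply/negPn/negP => Ys.
case: (shortenP ps) lA => s' ps' us' s's; rewrite {}/G' in ps'.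
case: s' ps' us' s's => [_ _ _ /= pA | b s' ps' us' s's lA].
  by move: p_others; rewrite pA !inE eqxx.
have Ys' : Y \notin belast b s'.
  by apply: contra Ys => /mem_belast/s's.
have As' : A \notin belast b s'.
  move: (us'); rewrite cons_uniq => /andP[_].
  by rewrite lastI rcons_uniq -lA => /andP[].
pose K := [set x | x \in colliders (Gp A Y E) p b s'].
have K_others : K \subset others A Y.
  apply/subsetP => x; rewrite inE => /colliders_sub_belast xs.
  rewrite !inE negb_or; apply/andP.
  by split; [apply: contraNneq As' | apply: contraNneq Ys'] => <-.
apply: (sep_pA K K_others p A (set11 p) (set11 A)); exists (b :: s').
rewrite ps' us' lA eqxx /=; case/andP: us' => _ us'.
by apply: active_from_colliders => // x; rewrite inE.
Qed.

Hypothesis AY : A != Y.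

Lemma dsep_Gp_drop_precision (K P : {set T}) :
  (forall p, p \in P -> precision A Y E p) ->
  dsep G' [set A] [set Y] (K :|: P) -> dsep G' [set A] [set Y] K.
Proof.
move=> precP sepKP a y; rewrite !inE => /eqP-> /eqP-> [s /and4P[ps us ls act]].
have [/hasP[x xs xP] | /hasPn noP] := boolP (has (mem P) s).
  case/splitPr: xs ps us ls => s1 s2; rewrite cat_path last_cat /=.
  case/and3P => ps1 e1 _; rewrite cat_uniq => /andP[_ /and3P[_ /hasPn disj _]] ls.
  have prefix : path (adj G') A (rcons s1 x) by rewrite rcons_path ps1 e1.
  have := precision_walk_to_A (precP x xP) (path_adj_rev prefix) (last_rcons _ _ _).
  rewrite mem_rcons inE mem_rev => /orP[/eqP YA | Ys1].
    by move: AY; rewrite YA eqxx.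
  by have := disj _ (mem_last x s2); rewrite (eqP ls) Ys1.
apply: (sepKP A Y (set11 A) (set11 Y)); exists s; rewrite ps us ls /=.
case: s act noP {ps us ls} => [|b s] //= act noP.
apply: active_from_subset act; first exact: subsetUl.
by move=> x xs; rewrite inE => /orP[// | xP]; move: (noP x xs); rewrite /= xP.
Qed.

Hypotheses (dagE : dag E) (EAY : E A Y)
  (descA : forall v, connect E A v -> v \in [set A; Y]).

Lemma connect_Y w : connect E Y w -> w = Y.
Proof.
move=> Yw; have := descA (connect_trans (connect1 EAY) Yw).
rewrite !inE => /orP[/eqP wA | /eqP //]; subst w.
by move: (dagE EAY); rewrite Yw.
Qed.

Lemma no_child_Y x : ~~ E Y x.
Proof.
apply/negP => EYx; have xY := connect_Y (connect1 EYx); subst x.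
by move: (dagE EYx); rewrite connect0.
Qed.

Lemma active_from_Y_notin_belast (F : rel T) (K : {set T}) a b s :
  subrel F E -> Y \notin K -> path (adj F) a (b :: s) ->
  active_from F K a b s -> Y \notin belast b s.
Proof.
move=> FE YK; elim: s a b => [|c s IH] a b //=.
case/andP=> ab /andP[bc pc] /andP[open_b act]; rewrite inE negb_or.
rewrite (IH b c) ?andbT /= ?bc //; apply/negP => /eqP bY; subst b.
have into_Y u : adj F u Y -> F u Y.
  by case/orP => // /FE; rewrite (negbTE (no_child_Y u)).
have bcY : adj F c Y by rewrite /adj orbC.
rewrite (into_Y _ ab) (into_Y _ bcY) /= in open_b.
case/existsP: open_b => w /andP[wK Yw].
have /connect_Y wY : connect E Y w by apply: connect_sub Yw => u v /FE/connect1.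
by rewrite -wY wK in YK.
Qed.

Lemma path_adj_Gp x s : path (adj E) x s -> Y \notin x :: s -> path (adj G') x s.
Proof.
elim: s x => [|y s IH] x //= /andP[xy ps]; rewrite !inE !negb_or.
rewrite ![Y == _]eq_sym => /and3P[xY yY sY].
rewrite IH ?inE ?negb_or 1?eq_sym ?yY //= andbT.
by rewrite /adj /G' /Gp /remove_edge (negbTE xY) (negbTE yY) !andbF !andbT.
Qed.

Lemma active_walk_in_Gp (F : rel T) (K : {set T}) x s :
  subrel F E -> Y \notin K -> x != Y -> last x s != Y ->
  path (adj F) x s -> active F K x s -> path (adj G') x s && (Y \notin s).
Proof.
move=> FE YK xY lY ps act.
have Yxs : Y \notin x :: s.
  case: s ps act lY => [|b s] ps act lY; first by rewrite inE eq_sym.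
  rewrite inE negb_or eq_sym xY lastI mem_rcons inE negb_or eq_sym lY /=.
  exact: active_from_Y_notin_belast FE YK ps act.
rewrite path_adj_Gp //; last first.
  by apply: sub_path ps => u v; rewrite /adj => /orP[]/FE ->; rewrite ?orbT.
by move: Yxs; rewrite inE negb_or => /andP[].
Qed.

Lemma connect_Gp x w : connect E x w -> w != Y -> connect G' x w.
Proof.
case/connectP => p; elim: p x => [|y p IH] x /=; first by move=> _ ->.
case/andP => Exy py wl wY; apply: connect_trans (IH y py wl wY).
apply: connect1; rewrite /G' /Gp /remove_edge Exy /=.
apply/negP => /andP[_ /eqP yY]; subst y.
have /connect_Y wY' : connect E Y w by apply/connectP; exists p.
by rewrite wY' eqxx in wY.
Qed.

Lemma active_Gp (K : {set T}) x s :
  Y \notin K -> path (adj E) x s -> active E K x s -> active G' K x s.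
Proof.
case: s => [|b s] //= YK ps act.
have := active_from_Y_notin_belast (fun _ _ => id) YK ps act.
elim: s x b {ps} act => [|c s IH] a b //=; rewrite inE negb_or eq_sym.
case/andP=> open_b act /andP[bY Ys]; rewrite IH // andbT.
rewrite /G' /Gp /remove_edge (negbTE bY) !andbF !andbT.
case: ifP open_b => // _ /existsP[w /andP[wK bw]]; apply/existsP; exists w.
by rewrite wK connect_Gp //; apply: contraNneq YK => <-.
Qed.

Lemma dsep_precision_A (P Z : {set T}) :
  (forall p, p \in P -> precision A Y E p) -> Y \notin Z ->
  dsep E P [set A] Z.
Proof.
move=> precP YZ p a pP; rewrite inE => /eqP-> [s /and4P[ps _ /eqP ls act]].
have lsY : last p s != Y by rewrite ls.
have /andP[ps' Ys] :=
  active_walk_in_Gp (fun _ _ => id) YZ (others_neqY (precP p pP).1) lsY ps act.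
by rewrite (precision_walk_to_A (precP p pP) ps' ls) in Ys.
Qed.

Lemma dsep_precision_confounder (P Z U : {set T}) :
  (forall p, p \in P -> precision A Y E p) -> Y \notin Z ->
  (forall u, u \in U -> ext_confounder A Y E u) ->
  dsep E P U (A |: Z).
Proof.
move=> precP YZ confU p u pP uU [s /and4P[ps _ /eqP ls act]].
case: (confU u uU) => u_others [[K [K_others [t /and4P[pt _ /eqP lt actt]]]] _].
have uY := others_neqY u_others.
have YAZ : Y \notin A |: Z by rewrite !inE negb_or eq_sym AY.
have lsY : last p s != Y by rewrite ls.
have /andP[ps' Ys] :=
  active_walk_in_Gp (fun _ _ => id) YAZ (others_neqY (precP p pP).1) lsY ps act.
have ltY : last u t != Y by rewrite lt.
have /andP[_ Yt] := active_walk_in_Gp Gp_sub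
  (Y_notin_subset_others K_others) uY ltY pt actt.
have := precision_walk_to_A (s := s ++ t) (precP p pP).
rewrite cat_path ps' ls pt last_cat ls lt mem_cat (negbTE Ys) (negbTE Yt).
by move/(_ isT erefl).
Qed.

Lemma dsep_precision_Y (S Ps : T) (Z : {set T}) :
  precision A Y E S -> Ps != Y -> Y \notin Z ->
  dsep G' [set S] [set Y] (Ps |: Z) -> dsep E [set S] [set Y] (Z :|: [set Ps]).
Proof.
move=> precS PsY YZ sepSY x y; rewrite !inE => /eqP-> /eqP->.
case=> s /and4P[ps us /eqP ls act].
have SY := others_neqY precS.1.
case/lastP: s ps us ls act => [_ _ /= SY' | s z]; first by rewrite SY' eqxx in SY.
rewrite last_rcons => ps us zY act; subst z.
have Ys : Y \notin s by move: (us); rewrite cons_uniq rcons_uniq => /and3P[_ ->].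
move: (ps); rewrite rcons_path => /andP[ps' lsY].
have ps'G : path (adj G') S s by rewrite path_adj_Gp // inE negb_or eq_sym SY.
have [lA | lA] := eqVneq (last S s) A.
  by rewrite (precision_walk_to_A precS ps'G lA) in Ys.
have YK : Y \notin Z :|: [set Ps] by rewrite !inE negb_or YZ eq_sym.
apply: (sepSY S Y (set11 S) (set11 Y)); exists (rcons s Y).
rewrite rcons_path ps'G us last_rcons eqxx setUC (active_Gp YK ps act) /= andbT.
move: lsY; rewrite /adj /G' /Gp /remove_edge (negbTE lA) (negbTE (no_child_Y _)).
by rewrite orbF => ->.
Qed.

End Confounding.

Unset Implicit Arguments.
Set Strict Implicit.

Theorem lemmaB4 (T : finType) (E : rel T) (A Y : T) (P Z U : {set T}) :
  dag E -> A != Y -> E A Y ->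
  (forall v, connect E A v -> v \in [set A; Y]) ->
  (forall p, p \in P -> precision A Y E p) ->
  Z \subset others A Y ->
  (forall u, u \in U -> ext_confounder A Y E u) ->
  irreducible A Y E (Z :|: P) (Z :|: P :|: U) ->
  (dsep (Gp A Y E) [set A] [set Y] (Z :|: P :|: U) /\
   dsep (Gp A Y E) [set A] [set Y] (Z :|: U) /\
   valid_adj A Y E (Z :|: P :|: U) /\
   valid_adj A Y E (Z :|: U)) /\
  (dsep E P [set A] Z /\
   dsep E P U (A |: Z)) /\
  (forall S Ps : T,
     suboptimal A Y E S -> precision A Y E Ps ->
     (forall Z0 : {set T}, Z0 \subset others A Y ->
        dsep (Gp A Y E) [set S] [set Y] (Ps |: Z0)) ->
     dsep E [set S] [set Y] (Z :|: [set Ps])).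
Proof.
move=> dagE AY EAY descA precP Z_others confU [_ [[ZPU_others sepZPU] _]].
have YZ := Y_notin_subset_others Z_others.
have ZU_others : Z :|: U \subset others A Y.
  by rewrite subUset Z_others; apply/subsetP => u /confU[].
have sepZU : dsep (Gp A Y E) [set A] [set Y] (Z :|: U).
  by apply: (dsep_Gp_drop_precision AY precP); rewrite setUAC.
split; first by do !split.
split; first split.
- exact: (dsep_precision_A AY dagE EAY descA precP YZ).
- exact: (dsep_precision_confounder AY dagE EAY descA precP YZ confU).
move=> S Ps [precS _] [Ps_others _] sepSY.
exact: (dsep_precision_Y dagE EAY descA precS (others_neqY Ps_others) YZ
  (sepSY Z Z_others)).
Qed.
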